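(* For $\gamma>0$ and an integer $d\geq1$, let $BD(\gamma,d)$ be the birth-and-death process on $\{0,1,2,\ldots\}$ with birth rates $\lambda_n(\gamma,d)$ and death rates $\mu_n(\gamma,d)$, $n\geq1$, given by $$\mu_n(\gamma,d)=\sum_{i=1}^d i\gamma^{i}\binom{d}{i}\binom{n-1}{i-1},\qquad \lambda_n(\gamma,d)=\sum_{i=1}^d i\gamma^{i}\binom{d}{i}\binom{n-1}{i-1}+\gamma\sum_{i=1}^{d-1}(d-i)\gamma^{i}\binom{d}{i}\binom{n-1}{i-1},$$ and with an arbitrary birth rate $\lambda_0>0$ at state $0$. Then $BD(\gamma,d)$ is null-recurrent for $d\leq2$ and transient for $d\geq3$. *)

From Stdlib Require Import Reals Lra.
Open Scope R_scope.

Fixpoint binom (n k : nat) : nat :=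
  match n, k with
  | _, O => 1%nat
  | O, S _ => 0%nat
  | S n', S k' => (binom n' k' + binom n' (S k'))%nat
  end.

(* sum_{i=a}^{b} f i  (empty if b < a) *)
Fixpoint rsum_to (f : nat -> R) (b : nat) : R :=
  match b with
  | O => f O
  | S b' => rsum_to f b' + f b
  end.
Definition rsum (a b : nat) (f : nat -> R) : R :=
  rsum_to (fun i => if Nat.leb a i then f i else 0) b.

(* Jump chain: from n go up w.p. lam n/(lam n + mu n), down w.p. mu n/(...). *)
Definition p_up (lam mu : nat -> R) (n : nat) : R := lam n / (lam n + mu n).
Definition p_down (lam mu : nat -> R) (n : nat) : R := mu n / (lam n + mu n).

(* hit_within lam mu N x = P_x(the jump chain hits 0 within N jumps). *)
Fixpoint hit_within (lam mu : nat -> R) (N x : nat) : R :=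
  match N with
  | O => match x with O => 1 | S _ => 0 end
  | S N' =>
      match x with
      | O => 1
      | S x' => p_up lam mu x * hit_within lam mu N' (S x)
              + p_down lam mu x * hit_within lam mu N' x'
      end
  end.

(* Probability, starting at 0, of returning to 0 within N+1 jumps
   (the first jump from 0 goes to 1 since mu 0 = 0). *)
Definition return_within (lam mu : nat -> R) (N : nat) : R :=
  hit_within lam mu N 1.

(* time_within lam mu N x = E_x[ time elapsed before min(T_0, N-th jump) ],
   where holding time at n is exponential of rate lam n + mu n. *)
Fixpoint time_within (lam mu : nat -> R) (N x : nat) : R :=
  match N with
  | O => 0
  | S N' =>
      match x with
      | O => 0
      | S x' => / (lam x + mu x)
              + p_up lam mu x * time_within lam mu N' (S x)
              + p_down lam mu x * time_within lam mu N' x'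
      end
  end.

(* Expected return time to 0 from 0, truncated: holding time at 0 plus
   E_1[time before min(T_0, N-th jump)]. Its supremum over N is E_0[return time]. *)
Definition return_time_within (lam mu : nat -> R) (N : nat) : R :=
  / lam 0%nat + time_within lam mu N 1.

(* The (irreducible) process is recurrent iff state 0 is recurrent,
   i.e. the return probability to 0 equals 1. *)
Definition recurrent (lam mu : nat -> R) : Prop :=
  Un_cv (return_within lam mu) 1.

Definition transient (lam mu : nat -> R) : Prop := ~ recurrent lam mu.

Definition null_recurrent (lam mu : nat -> R) : Prop :=
  recurrent lam mu /\
  (forall M : R, exists N : nat, M < return_time_within lam mu N).

Definition bd_mu (g : R) (d : nat) (n : nat) : R :=
  match n with
  | O => 0
  | S _ => rsum 1 d (fun i =>
             INR i * g ^ i * INR (binom d i) * INR (binom (n - 1) (i - 1)))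
  end.

Definition bd_lam (g : R) (d : nat) (lam0 : R) (n : nat) : R :=
  match n with
  | O => lam0
  | S _ => rsum 1 d (fun i =>
             INR i * g ^ i * INR (binom d i) * INR (binom (n - 1) (i - 1)))
         + g * rsum 1 (d - 1) (fun i =>
             INR (d - i) * g ^ i * INR (binom d i) * INR (binom (n - 1) (i - 1)))
  end.

From Stdlib Require Import Reals Lra Lia.
Open Scope R_scope.

(* Let [w k = prod_(i=1..k) mu_i / lam_i] be the increments of the scale function.
   For d = 1 the rates are constant, and for d = 2 they are [mu_n = 2g(1 + g(n-1))],
   [lam_n = 2g(1 + gn)], so [w k] is [1], resp. proportional to [1/(1 + gk)]; in both cases
   [sum w] diverges. The hitting probability of 0 is harmonic, hence affine in the scale
   function, and being bounded it must be identically 1: the chain is recurrent. The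
   Poisson equation [L V = -1], [V 0 = 0], has bounded solutions with [V 1] arbitrarily
   large, and each of them bounds the expected time to reach 0 from 1 from below, so the
   mean return time is infinite.
   For d >= 3 the drift [lam_n - mu_n] dominates [mu_n] strongly enough that
   [x |-> c / (x + c)], with [c = 1 + 2/g], is superharmonic; it equals 1 at 0 and is
   below 1 at 1, and it dominates the probability of hitting 0, so the chain is transient. *)

Fixpoint sum_lt (f : nat -> R) (m : nat) : R :=
  match m with O => 0 | S m' => sum_lt f m' + f m' end.

Lemma rsum_1_sum_lt f m : rsum 1 m f = sum_lt (fun j => f (S j)) m.
Proof.
  induction m as [|m IH]; [reflexivity|].
  change (rsum 1 (S m) f) with (rsum 1 m f + f (S m)). rewrite IH. reflexivity.
Qed.

Lemma sum_lt_ext f h m : (forall j, (j < m)%nat -> f j = h j) -> sum_lt f m = sum_lt h m.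
Proof.
  induction m as [|m IH]; intros H; simpl; [reflexivity|].
  rewrite IH by (intros; apply H; lia). rewrite H by lia. reflexivity.
Qed.

Lemma sum_lt_le f h m : (forall j, (j < m)%nat -> f j <= h j) -> sum_lt f m <= sum_lt h m.
Proof.
  induction m as [|m IH]; intros H; simpl; [lra|].
  assert (sum_lt f m <= sum_lt h m) by (apply IH; intros; apply H; lia).
  assert (f m <= h m) by (apply H; lia). lra.
Qed.

Lemma sum_lt_nonneg f m : (forall j, (j < m)%nat -> 0 <= f j) -> 0 <= sum_lt f m.
Proof.
  intros H. replace 0 with (sum_lt (fun _ => 0) m).
  - apply sum_lt_le. exact H.
  - induction m; simpl; [reflexivity|]. rewrite IHm; [ring|]. intros; apply H; lia.
Qed.

Lemma sum_lt_plus f h m : sum_lt (fun j => f j + h j) m = sum_lt f m + sum_lt h m.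
Proof. induction m; simpl; [lra|]. rewrite IHm. lra. Qed.

Lemma sum_lt_scal a f m : sum_lt (fun j => a * f j) m = a * sum_lt f m.
Proof. induction m; simpl; [lra|]. rewrite IHm. lra. Qed.

Lemma sum_lt_shift f m : sum_lt f (S m) = f O + sum_lt (fun j => f (S j)) m.
Proof. induction m; simpl in *; [lra|]. rewrite IHm. lra. Qed.

Lemma sum_lt_const a m : sum_lt (fun _ => a) m = a * INR m.
Proof. induction m; simpl sum_lt; [simpl; ring|]. rewrite IHm, S_INR. ring. Qed.

Lemma sum_lt_mono f m n : (forall k, 0 <= f k) -> (m <= n)%nat -> sum_lt f m <= sum_lt f n.
Proof.
  intros Hf Hmn. induction Hmn as [|n _ IH]; [lra|]. simpl. pose proof (Hf n). lra.
Qed.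

Lemma sum_lt_le_eventually_nonpos f h N x : (forall k, 0 <= h k) ->
  (forall k, (k < N)%nat -> f k <= h k) -> (forall k, (N <= k)%nat -> f k <= 0) ->
  sum_lt f x <= sum_lt h N.
Proof.
  intros Hh Hlt Hge.
  apply Rle_trans with (sum_lt h (Nat.min x N)); [|apply sum_lt_mono; [exact Hh | apply Nat.le_min_r]].
  induction x as [|x IH]; [simpl; lra|].
  change (sum_lt f (S x)) with (sum_lt f x + f x).
  destruct (Compare_dec.le_lt_dec (S x) N).
  - rewrite Nat.min_l in IH by lia. rewrite Nat.min_l by lia. simpl.
    assert (f x <= h x) by (apply Hlt; lia). lra.
  - rewrite Nat.min_r in IH by lia. rewrite Nat.min_r by lia.
    assert (f x <= 0) by (apply Hge; lia). lra.
Qed.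

Lemma binom_0_r n : binom n 0 = 1%nat.
Proof. destruct n; reflexivity. Qed.

Lemma binom_1_r n : binom n 1 = n.
Proof. induction n; simpl; [reflexivity|]. rewrite binom_0_r, IHn. reflexivity. Qed.

Lemma binom_succ_r_mul n k : (S k * binom n (S k) + k * binom n k = n * binom n k)%nat.
Proof.
  revert k; induction n as [|n IH]; intros k.
  - destruct k; simpl; lia.
  - destruct k as [|k].
    + rewrite binom_1_r, binom_0_r. lia.
    + simpl binom. pose proof (IH k). pose proof (IH (S k)). nia.
Qed.

Lemma binom_succ_r_INR n k :
  INR (binom n (S k)) * (INR k + 1) = (INR n - INR k) * INR (binom n k).
Proof.
  pose proof (f_equal INR (binom_succ_r_mul n k)) as H.
  rewrite plus_INR, !mult_INR, S_INR in H. lra.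
Qed.

(** * Birth-and-death chains *)

Definition rates_pos (lam mu : nat -> R) : Prop :=
  forall n, (1 <= n)%nat -> 0 < lam n /\ 0 < mu n.

Lemma cv_const c : Un_cv (fun _ => c) c.
Proof.
  intros eps He. exists 0%nat. intros. unfold R_dist.
  replace (c - c) with 0 by ring. rewrite Rabs_R0; lra.
Qed.

Lemma cv_succ u l : Un_cv u l -> Un_cv (fun n => u (S n)) l.
Proof. intros H eps He; destruct (H eps He) as [N HN]; exists N; intros n Hn; apply HN; lia. Qed.

Section BirthDeath.

Variables lam mu : nat -> R.
Hypothesis Hpos : rates_pos lam mu.

Lemma jump_probs n : (1 <= n)%nat ->
  0 <= p_up lam mu n /\ 0 <= p_down lam mu n /\ p_up lam mu n + p_down lam mu n = 1.
Proof.
  intros Hn. destruct (Hpos n Hn). unfold p_up, p_down.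
  assert (0 < / (lam n + mu n)) by (apply Rinv_0_lt_compat; lra).
  split; [|split]; [unfold Rdiv; nra | unfold Rdiv; nra | field; lra].
Qed.

Lemma hit_within_0 N : hit_within lam mu N 0 = 1.
Proof. destruct N; reflexivity. Qed.

Lemma hit_within_step N x : hit_within lam mu (S N) (S x) =
  p_up lam mu (S x) * hit_within lam mu N (S (S x))
  + p_down lam mu (S x) * hit_within lam mu N x.
Proof. reflexivity. Qed.

Lemma time_within_step N x : time_within lam mu (S N) (S x) =
  / (lam (S x) + mu (S x)) + p_up lam mu (S x) * time_within lam mu N (S (S x))
  + p_down lam mu (S x) * time_within lam mu N x.
Proof. reflexivity. Qed.

Definition superharmonic (h : nat -> R) : Prop :=
  forall x, p_up lam mu (S x) * h (S (S x)) + p_down lam mu (S x) * h x <= h (S x).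

Lemma hit_within_le_superharmonic h : h 0%nat = 1 -> (forall x, 0 <= h x) ->
  superharmonic h -> forall N x, hit_within lam mu N x <= h x.
Proof.
  intros H0 Hnn Hsup N. induction N as [|N IH]; intros [|x].
  - simpl; lra.
  - simpl; apply Hnn.
  - rewrite hit_within_0; lra.
  - rewrite hit_within_step. destruct (jump_probs (S x)) as [Hp [Hq _]]; [lia|].
    eapply Rle_trans; [|apply Hsup].
    apply Rplus_le_compat; apply Rmult_le_compat_l; auto.
Qed.

Lemma hit_within_bounds N x : 0 <= hit_within lam mu N x <= 1.
Proof.
  split.
  - revert x. induction N as [|N IH]; intros [|x]; try (simpl; lra).
    rewrite hit_within_step. destruct (jump_probs (S x)) as [Hp [Hq _]]; [lia|].
    pose proof (IH (S (S x))). pose proof (IH x). nra.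
  - apply (hit_within_le_superharmonic (fun _ => 1)); [reflexivity | intros; lra | intro y].
    destruct (jump_probs (S y)) as [_ [_ Hsum]]; [lia|]. lra.
Qed.

Lemma hit_within_mono N x : hit_within lam mu N x <= hit_within lam mu (S N) x.
Proof.
  revert x. induction N as [|N IH]; intros [|x].
  - rewrite !hit_within_0; lra.
  - apply hit_within_bounds.
  - rewrite !hit_within_0; lra.
  - rewrite (hit_within_step (S N)), hit_within_step.
    destruct (jump_probs (S x)) as [Hp [Hq _]]; [lia|].
    apply Rplus_le_compat; apply Rmult_le_compat_l; auto.
Qed.

Lemma transient_of_superharmonic h : h 0%nat = 1 -> (forall x, 0 <= h x) ->
  superharmonic h -> h 1%nat < 1 -> transient lam mu.
Proof.
  intros H0 Hnn Hsup H1 Hrec.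
  destruct (Hrec (1 - h 1%nat)) as [N HN]; [lra|].
  specialize (HN N (le_n N)). unfold R_dist, return_within in HN. apply Rabs_def2 in HN.
  pose proof (hit_within_le_superharmonic h H0 Hnn Hsup N 1). lra.
Qed.

Lemma hit_within_cv x : {l | Un_cv (fun N => hit_within lam mu N x) l}.
Proof.
  apply growing_cv; [intro n; apply hit_within_mono|].
  exists 1. intros y [i ->]. apply hit_within_bounds.
Qed.

Definition hit_prob x : R := proj1_sig (hit_within_cv x).

Lemma hit_prob_cv x : Un_cv (fun N => hit_within lam mu N x) (hit_prob x).
Proof. exact (proj2_sig (hit_within_cv x)). Qed.

Lemma hit_prob_0 : hit_prob 0 = 1.
Proof.
  apply UL_sequence with (fun N => hit_within lam mu N 0); [apply hit_prob_cv|].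
  apply (Un_cv_ext (fun _ => 1)); [intro; symmetry; apply hit_within_0 | apply cv_const].
Qed.

Lemma hit_prob_bounds x : 0 <= hit_prob x <= 1.
Proof.
  split.
  - apply Rle_trans with (hit_within lam mu 0 x); [apply hit_within_bounds|].
    apply (growing_ineq (fun N => hit_within lam mu N x)); [intro; apply hit_within_mono|].
    apply hit_prob_cv.
  - apply (Rle_cv_lim (Un := fun N => hit_within lam mu N x) (Vn := fun _ => 1));
      [intro; apply hit_within_bounds | apply hit_prob_cv | apply cv_const].
Qed.

Lemma hit_prob_harmonic m : hit_prob (S m) =
  p_up lam mu (S m) * hit_prob (S (S m)) + p_down lam mu (S m) * hit_prob m.
Proof.
  apply UL_sequence with (fun N => hit_within lam mu (S N) (S m)).
  - apply (cv_succ (fun N => hit_within lam mu N (S m))). apply hit_prob_cv.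
  - apply CV_plus; apply CV_mult; try apply cv_const; apply hit_prob_cv.
Qed.

Lemma harmonic_flux v m :
  v (S m) = p_up lam mu (S m) * v (S (S m)) + p_down lam mu (S m) * v m ->
  lam (S m) * (v (S m) - v (S (S m))) = mu (S m) * (v m - v (S m)).
Proof.
  intros Hv. destruct (Hpos (S m)) as [Hl Hm]; [lia|]. unfold p_up, p_down in Hv.
  apply Rmult_eq_reg_r with (/ (lam (S m) + mu (S m))); [|apply Rinv_neq_0_compat; lra].
  transitivity (v (S m) - (lam (S m) / (lam (S m) + mu (S m)) * v (S (S m))
                           + mu (S m) / (lam (S m) + mu (S m)) * v (S m))).
  - field. lra.
  - rewrite Hv at 1. field. lra.
Qed.

Lemma time_within_ge_subsolution (V : nat -> R) C : V 0%nat <= 0 -> (forall x, V x <= C) ->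
  (forall m, V (S m) <= / (lam (S m) + mu (S m))
                        + p_up lam mu (S m) * V (S (S m)) + p_down lam mu (S m) * V m) ->
  forall N x, V x - C * (1 - hit_within lam mu N x) <= time_within lam mu N x.
Proof.
  intros H0 HC Hsub N. induction N as [|N IH]; intros [|x].
  - simpl. lra.
  - simpl. specialize (HC (S x)). lra.
  - rewrite hit_within_0. simpl. lra.
  - rewrite hit_within_step, time_within_step.
    destruct (jump_probs (S x)) as [Hp [Hq Hsum]]; [lia|].
    pose proof (Rmult_le_compat_l _ _ _ Hp (IH (S (S x)))).
    pose proof (Rmult_le_compat_l _ _ _ Hq (IH x)).
    specialize (Hsub x). nra.
Qed.

Section Scale.

(* [Hlam_w] and [Hmu_w] say that [w] is the sequence of scale-function increments
   [w k = prod_(i=1..k) mu_i / lam_i]. *)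
Variables (w : nat -> R) (c : R).
Hypothesis Hc : 0 < c.
Hypothesis Hw0 : w 0%nat = 1.
Hypothesis Hlam_w : forall m, lam (S m) * w (S m) = c.
Hypothesis Hmu_w : forall m, mu (S m) * w m = c.

Lemma scale_pos k : 0 < w k.
Proof.
  destruct k as [|m]; [lra|]. destruct (Hpos (S m)) as [Hl _]; [lia|].
  replace (w (S m)) with (c / lam (S m)) by (rewrite <- (Hlam_w m); field; lra).
  apply Rdiv_lt_0_compat; lra.
Qed.

Lemma hit_prob_eq_scale x : hit_prob x = 1 - (1 - hit_prob 1) * sum_lt w x.
Proof.
  set (A := 1 - hit_prob 1).
  assert (Hdiff : forall y, hit_prob y - hit_prob (S y) = A * w y).
  { induction y as [|y IH].
    - rewrite hit_prob_0, Hw0. unfold A. ring.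
    - destruct (Hpos (S y)) as [Hl _]; [lia|].
      apply Rmult_eq_reg_l with (lam (S y)); [|lra].
      rewrite harmonic_flux by apply hit_prob_harmonic.
      rewrite IH. transitivity (A * (mu (S y) * w y)); [ring|].
      rewrite Hmu_w, <- (Hlam_w y). ring. }
  induction x as [|x IH]; simpl; [rewrite hit_prob_0; ring|].
  pose proof (Hdiff x). lra.
Qed.

Lemma recurrent_of_scale : (forall B, exists x, B < sum_lt w x) -> recurrent lam mu.
Proof.
  intros Hunb.
  assert (H1 : hit_prob 1 = 1).
  { set (A := 1 - hit_prob 1).
    assert (HA : 0 <= A) by (unfold A; pose proof (hit_prob_bounds 1); lra).
    destruct HA as [HA | HA]; [|unfold A in HA; lra].
    destruct (Hunb (/ A)) as [x Hx].
    pose proof (hit_prob_bounds x) as [Hx0 _]. rewrite hit_prob_eq_scale in Hx0.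
    apply (Rmult_lt_compat_l A) in Hx; [|exact HA].
    rewrite Rinv_r in Hx by lra. fold A in Hx0. lra. }
  unfold recurrent, return_within. rewrite <- H1. apply hit_prob_cv.
Qed.

(* Since [lam (S m) * w (S m) = mu (S m) * w m = c], this function solves the Poisson
   equation [lam (V (x+1) - V x) - mu (V x - V (x-1)) = -1] on the positive states. *)
Definition poisson_fun (K : R) (x : nat) : R :=
  sum_lt (fun k => w k * (K - INR (S k) / c)) x.

Lemma poisson_fun_step K m : poisson_fun K (S m) =
  / (lam (S m) + mu (S m)) + p_up lam mu (S m) * poisson_fun K (S (S m))
  + p_down lam mu (S m) * poisson_fun K m.
Proof.
  destruct (Hpos (S m)) as [Hl Hm]; [lia|].
  unfold poisson_fun. cbn [sum_lt]. set (s := sum_lt _ m).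
  replace (w (S m)) with (c / lam (S m)) by (rewrite <- (Hlam_w m); field; lra).
  replace (w m) with (c / mu (S m)) by (rewrite <- (Hmu_w m); field; lra).
  unfold p_up, p_down. rewrite !S_INR. field. lra.
Qed.

Lemma poisson_fun_1 K : poisson_fun K 1 = K - 1 / c.
Proof. unfold poisson_fun. simpl. rewrite Hw0. field. lra. Qed.

Lemma poisson_fun_bounded K : 0 <= K -> exists C, forall x, poisson_fun K x <= C.
Proof.
  intros HK. destruct (INR_archimed 1 (c * K)) as [N HN]; [lra|]. rewrite Rmult_1_r in HN.
  exists (sum_lt (fun k => w k * K) N). intro x.
  apply sum_lt_le_eventually_nonpos; intros k; pose proof (scale_pos k).
  - nra.
  - intros _. assert (0 <= INR (S k) / c) by (unfold Rdiv; apply Rmult_le_pos; [apply pos_INR | apply Rlt_le, Rinv_0_lt_compat; lra]).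
    nra.
  - intros Hk. assert (INR N <= INR (S k)) by (apply le_INR; lia).
    assert (K <= INR (S k) / c) by (apply Rmult_le_reg_l with c; [lra|]; field_simplify; lra).
    nra.
Qed.

Lemma null_recurrent_of_scale : 0 < lam 0%nat ->
  (forall B, exists x, B < sum_lt w x) -> null_recurrent lam mu.
Proof.
  intros Hl0 Hunb. pose proof (recurrent_of_scale Hunb) as Hrec. split; [exact Hrec|].
  intros M. set (K := Rabs M + 2 + 1 / c).
  assert (HK : 0 <= K) by (unfold K; pose proof (Rabs_pos M); assert (0 < 1 / c) by (apply Rdiv_lt_0_compat; lra); lra).
  destruct (poisson_fun_bounded K HK) as [C HC].
  assert (HC0 : 0 <= C) by (specialize (HC 0%nat); unfold poisson_fun in HC; simpl in HC; lra).
  pose proof (time_within_ge_subsolution (poisson_fun K) C (Req_le _ _ eq_refl) HC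
                (fun m => Req_le _ _ (poisson_fun_step K m))) as Htime.
  destruct (Hrec (/ (C + 1))) as [N HN]; [apply Rinv_0_lt_compat; lra|].
  specialize (HN N (le_n N)). unfold R_dist, return_within in HN. apply Rabs_def2 in HN.
  exists N. unfold return_time_within.
  pose proof (Htime N 1%nat) as HT. rewrite poisson_fun_1 in HT.
  pose proof (hit_within_bounds N 1).
  assert (C * (1 - hit_within lam mu N 1) <= C * / (C + 1)) by (apply Rmult_le_compat_l; lra).
  assert (C * / (C + 1) < 1) by (apply Rmult_lt_reg_r with (C + 1); [lra|]; field_simplify; lra).
  pose proof (Rinv_0_lt_compat _ Hl0). pose proof (Rle_abs M). unfold K in HT. lra.
Qed.

End Scale.

(* The drift condition says exactly that [x |-> c / (x + c)] is superharmonic. *)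
Lemma transient_of_drift c : 0 < c ->
  (forall m, 2 * mu (S m) <= (lam (S m) - mu (S m)) * (INR m + c)) -> transient lam mu.
Proof.
  intros Hc Hdrift.
  apply (transient_of_superharmonic (fun x => c / (INR x + c))).
  - simpl. field. lra.
  - intro x. pose proof (pos_INR x). apply Rlt_le, Rdiv_lt_0_compat; lra.
  - intro m. destruct (Hpos (S m)) as [Hl Hm]; [lia|]. pose proof (Hdrift m).
    unfold p_up, p_down. rewrite !S_INR. pose proof (pos_INR m).
    set (l := lam (S m)) in *. set (u := mu (S m)) in *. set (y := INR m) in *.
    assert (E : c / (y + 1 + c) - (l / (l + u) * (c / (y + 1 + 1 + c)) + u / (l + u) * (c / (y + c)))
      = c * ((l - u) * (y + c) - 2 * u) / ((l + u) * (y + c) * (y + 1 + c) * (y + 1 + 1 + c)))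
      by (field; repeat split; lra).
    assert (0 <= c * ((l - u) * (y + c) - 2 * u) / ((l + u) * (y + c) * (y + 1 + c) * (y + 1 + 1 + c))).
    { apply Rmult_le_pos; [apply Rmult_le_pos; lra|].
      apply Rlt_le, Rinv_0_lt_compat. repeat apply Rmult_lt_0_compat; lra. }
    lra.
  - simpl. apply Rmult_lt_reg_r with (1 + c); [lra|]. field_simplify; lra.
Qed.

End BirthDeath.

(** * The rates of BD(gamma, d) *)

Definition bd_term (g : R) (d m j : nat) : R :=
  g ^ S j * INR (binom d (S j)) * INR (binom m j).

Lemma bd_term_nonneg g d m j : 0 < g -> 0 <= bd_term g d m j.
Proof.
  intros Hg. unfold bd_term. pose proof (pow_lt g (S j) Hg).
  pose proof (pos_INR (binom d (S j))). pose proof (pos_INR (binom m j)).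
  apply Rmult_le_pos; [apply Rmult_le_pos|]; lra.
Qed.

Lemma bd_mu_succ g d m : bd_mu g d (S m) = sum_lt (fun j => INR (S j) * bd_term g d m j) d.
Proof.
  unfold bd_mu. rewrite rsum_1_sum_lt. apply sum_lt_ext. intros j _.
  unfold bd_term. replace (S m - 1)%nat with m by lia. replace (S j - 1)%nat with j by lia. ring.
Qed.

Lemma bd_lam_succ g d lam0 m : bd_lam g d lam0 (S m) =
  bd_mu g d (S m) + g * sum_lt (fun j => INR (d - S j) * bd_term g d m j) (d - 1).
Proof.
  unfold bd_lam, bd_mu. rewrite !rsum_1_sum_lt. f_equal. f_equal. apply sum_lt_ext. intros j _.
  unfold bd_term. replace (S m - 1)%nat with m by lia. replace (S j - 1)%nat with j by lia. ring.
Qed.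

Lemma bd_rates_pos g d lam0 : 0 < g -> (1 <= d)%nat -> rates_pos (bd_lam g d lam0) (bd_mu g d).
Proof.
  intros Hg Hd [|m] Hn; [lia|]. destruct d as [|e]; [lia|].
  assert (Hmu : 0 < bd_mu g (S e) (S m)).
  { rewrite bd_mu_succ, sum_lt_shift.
    assert (0 <= sum_lt (fun j => INR (S (S j)) * bd_term g (S e) m (S j)) e).
    { apply sum_lt_nonneg. intros j _. apply Rmult_le_pos; [apply pos_INR | apply bd_term_nonneg; lra]. }
    assert (0 < INR 1 * bd_term g (S e) m 0).
    { unfold bd_term. rewrite binom_1_r, binom_0_r, (S_INR e). simpl. pose proof (pos_INR e). nra. }
    lra. }
  split; [|exact Hmu]. rewrite bd_lam_succ.
  assert (0 <= sum_lt (fun j => INR (S e - S j) * bd_term g (S e) m j) (S e - 1)).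
  { apply sum_lt_nonneg. intros j _. apply Rmult_le_pos; [apply pos_INR | apply bd_term_nonneg; lra]. }
  nra.
Qed.

Lemma bd1_rates g lam0 m : bd_mu g 1 (S m) = g /\ bd_lam g 1 lam0 (S m) = g.
Proof.
  assert (Hmu : bd_mu g 1 (S m) = g).
  { rewrite bd_mu_succ. unfold bd_term. simpl. rewrite binom_0_r. simpl. ring. }
  split; [exact Hmu|]. rewrite bd_lam_succ, Hmu. simpl. ring.
Qed.

Lemma bd2_rates g lam0 m : bd_mu g 2 (S m) = 2 * g * (1 + g * INR m) /\
  bd_lam g 2 lam0 (S m) = 2 * g * (1 + g * (INR m + 1)).
Proof.
  assert (Hmu : bd_mu g 2 (S m) = 2 * g * (1 + g * INR m)).
  { rewrite bd_mu_succ. unfold bd_term. simpl. rewrite binom_0_r, binom_1_r. simpl. ring. }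
  split; [exact Hmu|]. rewrite bd_lam_succ, Hmu. unfold bd_term. simpl. rewrite binom_0_r. simpl. ring.
Qed.

Lemma bd_term_succ g d m j : (INR j + 1) * (INR j + 2) * bd_term g d m (S j) =
  g * (INR d - INR j - 1) * (INR m - INR j) * bd_term g d m j.
Proof.
  unfold bd_term. pose proof (binom_succ_r_INR d (S j)) as Hd. pose proof (binom_succ_r_INR m j) as Hm.
  rewrite S_INR in Hd.
  transitivity (g * g ^ S j * (INR (binom d (S (S j))) * (INR j + 1 + 1)) * (INR (binom m (S j)) * (INR j + 1))).
  - cbn [pow]. ring.
  - rewrite Hd, Hm. ring.
Qed.

Lemma bd_drift_coeff g c e k : 0 < g -> g * c = g + 2 -> (2 <= e)%nat -> (k <= e)%nat ->
  2 * (INR k + 1) <= INR k * (INR k + 1) + g * (INR e - INR k) * (INR k + c).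
Proof.
  intros Hg Hc He Hk.
  assert (HE : 2 <= INR e) by (apply (le_INR 2) in He; simpl in He; lra).
  destruct k as [|[|k]].
  - simpl. nra.
  - simpl. nra.
  - assert (HK : 2 <= INR (S (S k))) by (rewrite !S_INR; pose proof (pos_INR k); lra).
    assert (INR (S (S k)) <= INR e) by (apply le_INR; lia).
    set (K := INR (S (S k))) in *. assert (0 < c) by nra.
    assert (0 <= g * (INR e - K) * (K + c)) by (apply Rmult_le_pos; [apply Rmult_le_pos|]; lra).
    nra.
Qed.

(* Termwise comparison after rewriting [(lam - mu) (m + c)] with [bd_term_succ]:
   the factor [m - j] is traded for a shift of the summation index. *)
Lemma bd_drift g d lam0 c m : 0 < g -> (3 <= d)%nat -> g * c = g + 2 ->
  2 * bd_mu g d (S m) <= (bd_lam g d lam0 (S m) - bd_mu g d (S m)) * (INR m + c).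
Proof.
  intros Hg Hd Hc. destruct d as [|e]; [lia|].
  rewrite bd_lam_succ, bd_mu_succ. replace (S e - 1)%nat with e by lia.
  set (b := bd_term g (S e) m).
  match goal with |- _ <= (?M + ?D - ?M) * _ => replace (M + D - M) with D by ring end.
  assert (Hshift : g * sum_lt (fun j => INR (S e - S j) * b j) e * (INR m + c) =
      sum_lt (fun j => (INR j + 1) * (INR j + 2) * b (S j)) e
      + sum_lt (fun j => g * (INR e - INR j) * (INR j + c) * b j) e).
  { transitivity (sum_lt (fun j => g * (INR m + c) * (INR (S e - S j) * b j)) e);
      [rewrite sum_lt_scal; ring|].
    rewrite <- sum_lt_plus. apply sum_lt_ext. intros j Hj. unfold b. rewrite bd_term_succ.
    replace (S e - S j)%nat with (e - j)%nat by lia. rewrite minus_INR, S_INR by lia. ring. }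
  assert (Hreindex : sum_lt (fun j => (INR j + 1) * (INR j + 2) * b (S j)) e =
      sum_lt (fun k => INR k * (INR k + 1) * b k) (S e)).
  { rewrite sum_lt_shift. simpl INR at 1. rewrite Rmult_0_l, Rmult_0_l, Rplus_0_l.
    apply sum_lt_ext. intros j _. rewrite S_INR. ring. }
  assert (Hextend : sum_lt (fun j => g * (INR e - INR j) * (INR j + c) * b j) e =
      sum_lt (fun j => g * (INR e - INR j) * (INR j + c) * b j) (S e)).
  { simpl sum_lt at 2. replace (INR e - INR e) with 0 by ring. ring. }
  rewrite Hshift, Hreindex, Hextend, <- sum_lt_plus, <- sum_lt_scal.
  apply sum_lt_le. intros k Hk.
  pose proof (bd_drift_coeff g c e k Hg Hc ltac:(lia) ltac:(lia)) as Hcoeff.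
  pose proof (bd_term_nonneg g (S e) m k Hg) as Hb. fold b in Hb.
  rewrite S_INR. nra.
Qed.

Lemma ln_1_plus_lt y : 0 < y -> ln (1 + y) < y.
Proof.
  intros Hy. rewrite <- (ln_exp y) at 2.
  apply ln_increasing; [lra | apply exp_ineq1; lra].
Qed.

Lemma sum_lt_inv_affine_ge_ln g x : 0 < g ->
  ln (1 + g * INR x) / g <= sum_lt (fun k => / (1 + g * INR k)) x.
Proof.
  intros Hg. induction x as [|x IH].
  - simpl. rewrite Rmult_0_r, Rplus_0_r, ln_1. unfold Rdiv. lra.
  - simpl sum_lt. rewrite S_INR.
    assert (0 <= g * INR x) by (apply Rmult_le_pos; [lra | apply pos_INR]).
    set (A := 1 + g * INR x) in *.
    assert (HA : 0 < A) by (unfold A; lra).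
    assert (Hga : 0 < g / A) by (apply Rdiv_lt_0_compat; lra).
    replace (1 + g * (INR x + 1)) with (A * (1 + g / A)) by (unfold A; field; lra).
    rewrite ln_mult by lra. pose proof (ln_1_plus_lt (g / A) Hga).
    replace ((ln A + ln (1 + g / A)) / g) with (ln A / g + ln (1 + g / A) / g) by (field; lra).
    assert (ln (1 + g / A) / g <= / A).
    { replace (/ A) with (g / A / g) by (field; lra).
      apply Rmult_le_compat_r; [apply Rlt_le, Rinv_0_lt_compat|]; lra. }
    lra.
Qed.

Lemma sum_lt_inv_affine_unbounded g : 0 < g ->
  forall B, exists x, B < sum_lt (fun k => / (1 + g * INR k)) x.
Proof.
  intros Hg B. destruct (INR_archimed g (exp (g * B))) as [n Hn]; [lra|]. exists n.
  eapply Rlt_le_trans; [|apply sum_lt_inv_affine_ge_ln; exact Hg].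
  assert (g * B < ln (1 + g * INR n)).
  { rewrite <- (ln_exp (g * B)). apply ln_increasing; [apply exp_pos | lra]. }
  apply Rmult_lt_reg_l with g; [lra|]. field_simplify; lra.
Qed.

Lemma bd1_null_recurrent g lam0 : 0 < g -> 0 < lam0 ->
  null_recurrent (bd_lam g 1 lam0) (bd_mu g 1).
Proof.
  intros Hg Hl0.
  apply (null_recurrent_of_scale _ _ (bd_rates_pos g 1 lam0 Hg (le_n 1)) (fun _ => 1) g);
    auto; intros.
  - rewrite (proj2 (bd1_rates g lam0 m)). ring.
  - rewrite (proj1 (bd1_rates g lam0 m)). ring.
  - destruct (INR_archimed 1 B) as [n Hn]; [lra|]. exists n. rewrite sum_lt_const. lra.
Qed.

Lemma bd2_null_recurrent g lam0 : 0 < g -> 0 < lam0 ->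
  null_recurrent (bd_lam g 2 lam0) (bd_mu g 2).
Proof.
  intros Hg Hl0.
  apply (null_recurrent_of_scale _ _ (bd_rates_pos g 2 lam0 Hg ltac:(lia))
           (fun k => / (1 + g * INR k)) (2 * g)); auto; intros.
  - lra.
  - simpl. rewrite Rmult_0_r, Rplus_0_r. apply Rinv_1.
  - rewrite (proj2 (bd2_rates g lam0 m)), S_INR. pose proof (pos_INR m). field. nra.
  - rewrite (proj1 (bd2_rates g lam0 m)). pose proof (pos_INR m). field. nra.
  - apply sum_lt_inv_affine_unbounded. exact Hg.
Qed.

Lemma bd_transient g d lam0 : 0 < g -> (3 <= d)%nat -> transient (bd_lam g d lam0) (bd_mu g d).
Proof.
  intros Hg Hd.
  apply (transient_of_drift _ _ (bd_rates_pos g d lam0 Hg ltac:(lia)) (1 + 2 / g)).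
  - assert (0 < 2 / g) by (apply Rdiv_lt_0_compat; lra). lra.
  - intro m. apply bd_drift; [exact Hg | exact Hd | field; lra].
Qed.

Theorem lemma4p2 (g : R) (d : nat) (lam0 : R) :
  0 < g -> (1 <= d)%nat -> 0 < lam0 ->
  ((d <= 2)%nat -> null_recurrent (bd_lam g d lam0) (bd_mu g d)) /\
  ((3 <= d)%nat -> transient (bd_lam g d lam0) (bd_mu g d)).
Proof.
  intros Hg Hd Hl0. split.
  - intros Hd2. destruct d as [|[|[|d]]]; try lia.
    + apply bd1_null_recurrent; assumption.
    + apply bd2_null_recurrent; assumption.
  - apply bd_transient. exact Hg.
Qed.
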